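(* Let $I\subseteq\mathbb{R}$ be an open interval, let $f\colon I\to(0,\infty)$ be a differentiable, concave and strictly increasing function, let $s,t\in I$ with $s<t$, and let $\lambda\in(0,1)$. Then $$f((1-\lambda)s+\lambda t)\leq \frac{f'(s)}{f'(t)}\cdot\big((1-\lambda)f(s)+\lambda f(t)\big).$$ *)

From Stdlib Require Import Reals.
From Coquelicot Require Export Coquelicot.
Open Scope R_scope.

Definition is_open_interval (I : R -> Prop) : Prop :=
  exists a b : Rbar, forall x, I x <-> (Rbar_lt a x /\ Rbar_lt x b).

Definition concave_on (I : R -> Prop) (f : R -> R) : Prop :=
  forall x y l, I x -> I y -> 0 <= l <= 1 ->
    (1 - l) * f x + l * f y <= f ((1 - l) * x + l * y).

Definition strictly_increasing_on (I : R -> Prop) (f : R -> R) : Prop :=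
  forall x y, I x -> I y -> x < y -> f x < f y.

(* The tangent line of a differentiable concave function lies above its graph.
   Tangents at [t] through a point beyond [t] and through [s] give
   [0 < f'(t) <= f'(s)]; the tangent at [s] bounds [f((1-l)s + l t)] by
   [f(s) + l f'(s) (t - s)], and the tangent at [t] bounds [(1-l) f(s) + l f(t)]
   from below by [f(s) + l f'(t) (t - s)].  Comparing the two, using [f(s) > 0]
   and [f'(t) <= f'(s)], gives the claim. *)

From Stdlib Require Import Reals Lra.
From Coquelicot Require Import Coquelicot.
Open Scope R_scope.

Lemma open_interval_between (Iv : R -> Prop) x y z :
  is_open_interval Iv -> Iv x -> Iv z -> x <= y <= z -> Iv y.
Proof.
  intros [a [b HI]] Ix Iz Hy.
  apply HI in Ix as [Hax _]; apply HI in Iz as [_ Hzb]; apply HI.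
  split.
  - destruct a as [a| |]; simpl in *; easy || lra.
  - destruct b as [b| |]; simpl in *; easy || lra.
Qed.

Lemma open_interval_ex_gt (Iv : R -> Prop) x :
  is_open_interval Iv -> Iv x -> exists y, Iv y /\ x < y.
Proof.
  intros [a [b HI]] Ix.
  pose proof (proj1 (HI x) Ix) as [Hax Hxb].
  destruct b as [b| |]; simpl in Hxb; try easy.
  - exists ((x + b) / 2); split; [apply HI; split|lra].
    + destruct a as [a| |]; simpl in *; easy || lra.
    + simpl; lra.
  - exists (x + 1); split; [apply HI; split|lra].
    + destruct a as [a| |]; simpl in *; easy || lra.
    + easy.
Qed.

Lemma derivable_pt_lim_ge_right_quotients (g : R -> R) x l c eta :
  derivable_pt_lim g x l -> 0 < eta ->
  (forall k, 0 < k < eta -> c <= (g (x + k) - g x) / k) -> c <= l.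
Proof.
  intros Hg Heta Hq.
  apply Rnot_lt_le; intros Hlc.
  destruct (Hg (c - l)) as [delta Hdelta]; [lra|].
  pose proof (cond_pos delta) as Hdpos.
  set (k := Rmin eta delta / 2).
  assert (Hk : 0 < k < eta /\ k < delta).
  { pose proof (Rmin_l eta delta); pose proof (Rmin_r eta delta).
    pose proof (Rmin_glb_lt eta delta 0 Heta Hdpos).
    unfold k; lra. }
  assert (Habs : Rabs k < delta) by (rewrite Rabs_pos_eq; lra).
  specialize (Hdelta k ltac:(lra) Habs).
  specialize (Hq k ltac:(lra)).
  pose proof (Rle_abs ((g (x + k) - g x) / k - l)).
  lra.
Qed.

Lemma concave_le_tangent (Iv : R -> Prop) (f : R -> R) x y :
  concave_on Iv f -> Iv x -> Iv y -> ex_derive f x ->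
  f y <= f x + Derive f x * (y - x).
Proof.
  intros Hc Ix Iy Hdx.
  set (g := fun k => f (x + k * (y - x))).
  assert (Hg : derivable_pt_lim g 0 ((y - x) * Derive f x)).
  { apply is_derive_Reals, (is_derive_comp f (fun k => x + k * (y - x))).
    - replace (x + 0 * (y - x)) with x by ring. exact (Derive_correct f x Hdx).
    - auto_derive; [easy|ring]. }
  (* Concavity makes every right difference quotient of [g] at 0 at least [f y - f x]. *)
  enough (f y - f x <= (y - x) * Derive f x) by lra.
  apply (derivable_pt_lim_ge_right_quotients g 0 _ _ 1 Hg Rlt_0_1).
  intros k Hk.
  assert (Hchord := Hc x y k Ix Iy ltac:(lra)).
  unfold g; rewrite Rplus_0_l, Rmult_0_l, Rplus_0_r.
  replace (x + k * (y - x)) with ((1 - k) * x + k * y) by ring.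
  apply Rmult_le_reg_r with k; [lra|].
  unfold Rdiv; rewrite Rmult_assoc, Rinv_l, Rmult_1_r by lra.
  lra.
Qed.

Lemma concave_derive_antitone (Iv : R -> Prop) (f : R -> R) x y :
  concave_on Iv f -> Iv x -> Iv y -> ex_derive f x -> ex_derive f y ->
  x < y -> Derive f y <= Derive f x.
Proof.
  intros Hc Ix Iy Hdx Hdy Hxy.
  pose proof (concave_le_tangent Iv f x y Hc Ix Iy Hdx).
  pose proof (concave_le_tangent Iv f y x Hc Iy Ix Hdy).
  nra.
Qed.

Lemma concave_increasing_derive_pos (Iv : R -> Prop) (f : R -> R) x :
  is_open_interval Iv -> concave_on Iv f -> strictly_increasing_on Iv f ->
  Iv x -> ex_derive f x -> 0 < Derive f x.
Proof.
  intros HI Hc Hinc Ix Hdx.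
  destruct (open_interval_ex_gt Iv x HI Ix) as [y [Iy Hxy]].
  pose proof (concave_le_tangent Iv f x y Hc Ix Iy Hdx).
  pose proof (Hinc x y Ix Iy Hxy).
  nra.
Qed.

Theorem lemma6 (Iv : R -> Prop) (f : R -> R) (s t lam : R) :
  is_open_interval Iv ->
  (forall x, Iv x -> 0 < f x) ->
  (forall x, Iv x -> ex_derive f x) ->
  concave_on Iv f ->
  strictly_increasing_on Iv f ->
  Iv s -> Iv t -> s < t ->
  0 < lam < 1 ->
  f ((1 - lam) * s + lam * t)
    <= (Derive f s / Derive f t) * ((1 - lam) * f s + lam * f t).
Proof.
  intros HI Hpos Hder Hc Hinc Is It Hst Hlam.
  set (m := (1 - lam) * s + lam * t).
  assert (Im : Iv m).
  { apply (open_interval_between Iv s m t HI Is It); unfold m; nra. }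
  pose proof (Hpos s Is) as Hfs.
  pose proof (concave_increasing_derive_pos Iv f t HI Hc Hinc It (Hder t It)) as HB.
  pose proof (concave_derive_antitone Iv f s t Hc Is It (Hder s Is) (Hder t It) Hst) as HAB.
  pose proof (concave_le_tangent Iv f s m Hc Is Im (Hder s Is)) as Hfm.
  pose proof (concave_le_tangent Iv f t s Hc It Is (Hder t It)) as Hfst.
  set (A := Derive f s) in *; set (B := Derive f t) in *.
  set (c := (1 - lam) * f s + lam * f t).
  replace (m - s) with (lam * (t - s)) in Hfm by (unfold m; ring).
  assert (Hc_ge : f s + lam * B * (t - s) <= c) by (unfold c; nra).
  assert (HBfm : B * f m <= B * f s + A * B * lam * (t - s)) by nra.
  assert (HAc : B * f s + A * B * lam * (t - s) <= A * c) by nra.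
  apply Rmult_le_reg_l with B; [exact HB|].
  replace (B * (A / B * c)) with (A * c) by (field; lra).
  lra.
Qed.
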